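(* Let $\hat{\mathbf Q}=\tilde{\mathbf Q}_{st}+\tilde{\mathbf Q}_{\mathcal I}\varepsilon$ be an $n\times n$ dual quaternion Hermitian matrix with $\tilde{\mathbf Q}_{st}=(\tilde q_{1,ij})$ and $\tilde{\mathbf Q}_{\mathcal I}=(\tilde q_{2,ij})$. Suppose $\tilde q_{1,ij}=0$ and $\tilde q_{1,ii}\neq\tilde q_{1,jj}$ for all $i\neq j$. Then for each $i=1,\dots,n$, $\tilde q_{1,ii}+\tilde q_{2,ii}\varepsilon$ is an eigenvalue of $\hat{\mathbf Q}$ with corresponding eigenvector $\hat{\mathbf v}_i$ whose $i$-th component is $1$ and whose $j$-th component, for $j\neq i$, is $\dfrac{\tilde q_{2,ji}}{\tilde q_{1,ii}-\tilde q_{1,jj}}\varepsilon$.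
   Context: Quaternions $q=q_0+q_1\mathbf i+q_2\mathbf j+q_3\mathbf k$ with conjugate $q^\ast$; dual quaternions $q_{st}+q_{\mathcal I}\varepsilon$ with $\varepsilon$ commuting with quaternions, $\varepsilon\ne0$, $\varepsilon^2=0$, multiplied by $(p_{st}+p_{\mathcal I}\varepsilon)(q_{st}+q_{\mathcal I}\varepsilon)=p_{st}q_{st}+(p_{st}q_{\mathcal I}+p_{\mathcal I}q_{st})\varepsilon$. A dual quaternion matrix is Hermitian if it equals its conjugate transpose (so its diagonal entries are dual numbers, i.e. have real standard and dual parts). A dual quaternion vector $\hat{\mathbf x}$ is appreciable if its standard part is nonzero. A dual number $\hat\lambda$ is an eigenvalue of $\hat{\mathbf Q}$ with eigenvector $\hat{\mathbf x}$ if $\hat{\mathbf x}$ is appreciable and $\hat{\mathbf Q}\hat{\mathbf x}=\hat{\mathbf x}\hat\lambda$. *)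

From mathcomp Require Import all_boot all_order all_algebra.
Set Implicit Arguments. Unset Strict Implicit. Unset Printing Implicit Defensive.
Import Order.TTheory GRing.Theory Num.Theory.
Local Open Scope ring_scope.

Section DQ.
Variable R : realFieldType.

Record quat := Quat { qre : R; qi : R; qj : R; qk : R }.

Definition qzero : quat := Quat 0 0 0 0.
Definition qreal (r : R) : quat := Quat r 0 0 0.
Definition qadd (p q : quat) : quat :=
  Quat (qre p + qre q) (qi p + qi q) (qj p + qj q) (qk p + qk q).
Definition qscale (r : R) (q : quat) : quat :=
  Quat (r * qre q) (r * qi q) (r * qj q) (r * qk q).
Definition qmul (p q : quat) : quat :=
  Quat (qre p * qre q - qi p * qi q - qj p * qj q - qk p * qk q)
       (qre p * qi q + qi p * qre q + qj p * qk q - qk p * qj q)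
       (qre p * qj q - qi p * qk q + qj p * qre q + qk p * qi q)
       (qre p * qk q + qi p * qj q - qj p * qi q + qk p * qre q).
Definition qconj (q : quat) : quat := Quat (qre q) (- qi q) (- qj q) (- qk q).

(* dual quaternion q_st + q_I eps *)
Record dquat := DQ { dst : quat; ddu : quat }.

Definition dqzero : dquat := DQ qzero qzero.
Definition dqone : dquat := DQ (qreal 1) qzero.
Definition dqadd (p q : dquat) : dquat := DQ (qadd (dst p) (dst q)) (qadd (ddu p) (ddu q)).
Definition dqmul (p q : dquat) : dquat :=
  DQ (qmul (dst p) (dst q)) (qadd (qmul (dst p) (ddu q)) (qmul (ddu p) (dst q))).
Definition dqconj (q : dquat) : dquat := DQ (qconj (dst q)) (qconj (ddu q)).
Definition dnum (a b : R) : dquat := DQ (qreal a) (qreal b).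

Definition dqmat (n : nat) := 'I_n -> 'I_n -> dquat.
Definition dqvec (n : nat) := 'I_n -> dquat.

Definition dqmulmv n (Q : dqmat n) (x : dqvec n) : dqvec n :=
  fun i => \big[dqadd/dqzero]_(j < n) dqmul (Q i j) (x j).

Definition dq_hermitian n (Q : dqmat n) : Prop :=
  forall i j, Q i j = dqconj (Q j i).

Definition appreciable n (x : dqvec n) : Prop :=
  exists i, dst (x i) <> qzero.

Definition dq_eigenpair n (Q : dqmat n) (a b : R) (x : dqvec n) : Prop :=
  appreciable x /\ forall i, dqmulmv Q x i = dqmul (x i) (dnum a b).

End DQ.

(* The standard part of Q is the real diagonal matrix diag(a_1, ..., a_n) and
   the standard part of v is the basis vector e_i, so only the dual part of the
   eigen-equation has content. Since eps^2 = 0, row k of Q v only sees Q_ki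
   (from v_i = 1) and Q_kk v_k; for k <> i its dual part is
   q + a_k q / (a_i - a_k) = a_i q / (a_i - a_k), with q the dual part of Q_ki,
   which is the dual part of v_k (a_i + b_i eps). *)
From HB Require Import structures.
From mathcomp Require Import all_boot all_order all_algebra.
From mathcomp Require Import ring lra.
Import Order.TTheory GRing.Theory Num.Theory.
Local Open Scope ring_scope.

Section DualQuaternionAlgebra.
Variable R : realFieldType.
Implicit Types (p q : quat R) (x y z : dquat R) (a b c : R).

Lemma quat_ext p q :
  qre p = qre q -> qi p = qi q -> qj p = qj q -> qk p = qk q -> p = q.
Proof. by case: p q => [? ? ? ?] [? ? ? ?] /= -> -> -> ->. Qed.

Lemma qaddA : associative (@qadd R).
Proof. by move=> p q r; apply: quat_ext; rewrite /= addrA. Qed.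

Lemma qaddC : commutative (@qadd R).
Proof. by move=> p q; apply: quat_ext; rewrite /= addrC. Qed.

Lemma qadd0q : left_id (qzero R) (@qadd R).
Proof. by move=> q; apply: quat_ext; rewrite /= add0r. Qed.

Lemma dqaddA : associative (@dqadd R).
Proof. by move=> x y z; rewrite /dqadd /= !qaddA. Qed.

Lemma dqaddC : commutative (@dqadd R).
Proof. by move=> x y; rewrite /dqadd qaddC [qadd (ddu x) _]qaddC. Qed.

Lemma dqadd0q : left_id (dqzero R) (@dqadd R).
Proof. by case=> s d; rewrite /dqadd /= !qadd0q. Qed.

HB.instance Definition _ :=
  Monoid.isComLaw.Build (dquat R) (dqzero R) (@dqadd R) dqaddA dqaddC dqadd0q.

Lemma qmul_qreal_l a q : qmul (qreal a) q = qscale a q.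
Proof. by apply: quat_ext => /=; ring. Qed.

Lemma qmul_qreal_r a q : qmul q (qreal a) = qscale a q.
Proof. by apply: quat_ext => /=; ring. Qed.

Lemma qmul0q q : qmul (qzero R) q = qzero R.
Proof. by apply: quat_ext => /=; ring. Qed.

Lemma qmulq0 q : qmul q (qzero R) = qzero R.
Proof. by apply: quat_ext => /=; ring. Qed.

Lemma qconj_fixed_real q : qconj q = q -> q = qreal (qre q).
Proof. by case: q => r u v w [eu ev ew]; apply: quat_ext => /=; lra. Qed.

Lemma dqmul1q x : dqmul (dqone R) x = x.
Proof.
case: x => s d; rewrite /dqmul /dqone /= qmul0q !qmul_qreal_l qaddC qadd0q.
by congr DQ; apply: quat_ext => /=; rewrite mul1r.
Qed.

Lemma dqmulq1 x : dqmul x (dqone R) = x.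
Proof.
case: x => s d; rewrite /dqmul /dqone /= qmulq0 !qmul_qreal_r qadd0q.
by congr DQ; apply: quat_ext => /=; rewrite mul1r.
Qed.

Lemma dqmul_infinitesimal p q : dqmul (DQ (qzero R) p) (DQ (qzero R) q) = dqzero R.
Proof. by rewrite /dqmul /= !qmul0q qmulq0 qadd0q. Qed.

Lemma dqmul_dnum_infinitesimal a b q :
  dqmul (dnum a b) (DQ (qzero R) q) = DQ (qzero R) (qscale a q).
Proof. by rewrite /dqmul /= !qmulq0 qmul_qreal_l qaddC qadd0q. Qed.

Lemma dqmul_infinitesimal_dnum q a b :
  dqmul (DQ (qzero R) q) (dnum a b) = DQ (qzero R) (qscale a q).
Proof. by rewrite /dqmul /= !qmul0q qmul_qreal_r qadd0q. Qed.

Lemma dqadd_infinitesimal p q :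
  dqadd (DQ (qzero R) p) (DQ (qzero R) q) = DQ (qzero R) (qadd p q).
Proof. by rewrite /dqadd /= qadd0q. Qed.

Lemma qadd_qscale_gap a c q : a != c ->
  qadd q (qscale c (qscale (a - c)^-1 q)) = qscale a (qscale (a - c)^-1 q).
Proof. by rewrite -subr_eq0 => ac; apply: quat_ext => /=; field. Qed.

End DualQuaternionAlgebra.

Section HermitianDiagonal.
Set Implicit Arguments.
Variables (R : realFieldType) (n : nat) (Q : dqmat R n).
Hypothesis hermQ : dq_hermitian Q.

Lemma dq_hermitian_diag k : Q k k = dnum (qre (dst (Q k k))) (qre (ddu (Q k k))).
Proof.
by move: (hermQ k k); case: (Q k k) => s d [/esym/qconj_fixed_real -> /esym/qconj_fixed_real ->].
Qed.

Lemma dq_hermitian_diag_neq k l :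
  dst (Q k k) <> dst (Q l l) -> qre (dst (Q k k)) != qre (dst (Q l l)).
Proof.
move=> neq_kl; apply/eqP => eq_kl; apply: neq_kl.
by rewrite (dq_hermitian_diag k) (dq_hermitian_diag l) /= eq_kl.
Qed.

End HermitianDiagonal.

Theorem lemma3p7 (R : realFieldType) (n : nat) (Q : dqmat R n) :
  dq_hermitian Q ->
  (forall i j : 'I_n, i != j -> dst (Q i j) = qzero R) ->
  (forall i j : 'I_n, i != j -> dst (Q i i) <> dst (Q j j)) ->
  forall i : 'I_n,
    dq_eigenpair Q (qre (dst (Q i i))) (qre (ddu (Q i i)))
      (fun j : 'I_n =>
         if j == i then dqone R
         else DQ (qzero R)
                 (qscale (qre (dst (Q i i)) - qre (dst (Q j j)))^-1 (ddu (Q j i)))).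
Proof.
move=> hermQ offQ gapQ i; set v := fun j => if j == i then _ else _.
have vi : v i = dqone R by rewrite /v eqxx.
have vE j : j != i -> v j = DQ (qzero R) (ddu (v j)) by rewrite /v => /negbTE ->.
split=> [|k]; first by exists i; rewrite vi => -[/eqP]; rewrite oner_eq0.
have offQE j l : j != l -> Q j l = DQ (qzero R) (ddu (Q j l)).
  by move=> /offQ; case: (Q j l) => s d /= ->.
have far_terms j : j != i -> j != k -> dqmul (Q k j) (v j) = dqzero R.
  by move=> ji jk; rewrite vE // offQE ?dqmul_infinitesimal // eq_sym.
rewrite /dqmulmv (bigD1 i) // vi dqmulq1.
have [eq_ki | ki] := eqVneq k i.
  subst k; rewrite big1 => [|j ji]; last by rewrite far_terms.
  by rewrite Monoid.mulm1 vi dqmul1q -dq_hermitian_diag.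
rewrite (bigD1 k) // big1 => [|j /andP[ji jk]]; last by rewrite far_terms.
rewrite Monoid.mulm1 offQE // (vE k) // (dq_hermitian_diag hermQ k).
rewrite dqmul_dnum_infinitesimal dqmul_infinitesimal_dnum /= dqadd_infinitesimal.
rewrite /v (negbTE ki) qadd_qscale_gap //.
by apply: dq_hermitian_diag_neq => //; apply: gapQ; rewrite eq_sym.
Qed.
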